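(* Let $B\ge 2$ and $\eta\in\mathbb{N}$. Suppose that either $B\ge 3$ and $\gamma_B(\eta+1)>2(B-1)^2$, or $B=2$ and $\gamma_B(\eta+1)\ge B^2=4$. Then $\gamma_B(\eta)<\gamma_B(\eta+1)<\gamma_B(\eta+2)<\cdots<\gamma_B(\eta+k)$ for every $k\in\mathbb{N}$; that is, the sequence $(\gamma_B(n))_{n\ge\eta}$ is strictly increasing.
   Context: Fix an integer base $B \geq 2$. Every integer $x>0$ is written uniquely as $x=\sum_{i=0}^{L(x)-1} x_i B^i$ with digits $0 \le x_i \le B-1$ and $x_{L(x)-1}\neq 0$. Define $\mathcal{H}_B(x)=\sum_{i=0}^{L(x)-1} x_i^2$, $\mathcal{H}_B(0)=0$, $\mathcal{H}_B^0(x)=x$, $\mathcal{H}_B^{n}=\mathcal{H}_B\circ\mathcal{H}_B^{n-1}$. A positive integer $x$ is happy if $\mathcal{H}_B^n(x)=1$ for some $n\in\mathbb{N}$; its height is $\eta_B(x)=\min\{\alpha\in\mathbb{N}:\mathcal{H}_B^\alpha(x)=1\}$. For $n\in\mathbb{N}$, $\gamma_B(n)$ denotes the smallest happy number $x\ge 1$ with $\eta_B(x)=n$. *)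

From mathcomp Require Import all_boot.
From Stdlib Require Import ClassicalEpsilon.
Set Implicit Arguments. Unset Strict Implicit. Unset Printing Implicit Defensive.

(* Number of base-B digits L(x) of x > 0; L(0) := 0 (so H_B(0) = 0). *)
Definition ndigits (B x : nat) : nat := if x == 0 then 0 else (trunc_log B x).+1.

Definition digit (B x i : nat) : nat := (x %/ B ^ i) %% B.

Definition H (B x : nat) : nat := \sum_(i < ndigits B x) (digit B x i) ^ 2.

Definition Hiter (B n x : nat) : nat := iter n (H B) x.

(* eta_B(x) = n, i.e. n = min {a : H_B^a(x) = 1} (x is then happy). *)
Definition has_height (B n x : nat) : bool :=
  (Hiter B n x == 1) && all (fun m => Hiter B m x != 1) (iota 0 n).

Definition gamma_pred (B n : nat) : pred nat := fun x => (0 < x) && has_height B n x.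

(* gamma_B(n): the smallest happy x >= 1 with eta_B(x) = n
   (defaulting to 0 if no such x exists; for B >= 2 it always exists). *)
Definition gamma (B n : nat) : nat :=
  match excluded_middle_informative (exists x, gamma_pred B n x) with
  | left h => ex_minn h
  | right _ => 0
  end.

(** Below [B^2], [H_B] is at most [2(B-1)^2]; from [B^2] on, [H_B(x) < x].
   If [z = gamma_B(n+1)] then [H_B(z)] is happy of height [n], so
   [gamma_B(n) <= H_B(z)].  Hence once [gamma_B(n) > 2(B-1)^2], the minimizer
   [z] cannot lie below [B^2], and then [gamma_B(n) <= H_B(z) < z]: the
   sequence increases and stays above [2(B-1)^2].  Existence of [gamma_B(n+1)]
   comes from the repunit with [gamma_B(n)] digits, whose image under [H_B] is
   [gamma_B(n)]. *)

From mathcomp Require Import all_boot zify.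
From Stdlib Require Import ClassicalEpsilon.

Section HappyHeights.

Set Implicit Arguments.
Unset Strict Implicit.

Variable B : nat.
Hypothesis B_gt1 : 1 < B.

Lemma ndigits_div x : 0 < x -> ndigits B x = (ndigits B (x %/ B)).+1.
Proof.
move=> x_gt0; rewrite /ndigits.
have -> : (x == 0) = false by lia.
have [x_ltB | B_lex] := ltnP x B.
  rewrite divn_small // eqxx; congr _.+1; apply/eqP.
  by rewrite trunc_log_eq0; lia.
have q_gt0 : 0 < x %/ B by rewrite divn_gt0 //; lia.
have -> : (x %/ B == 0) = false by lia.
congr _.+1; apply: trunc_log_eq => //; apply/andP; split.
  by rewrite expnS mulnC -leq_divRL //; [apply: trunc_logP | lia].
by rewrite expnS mulnC -ltn_divLR //; [apply: trunc_log_ltn | lia].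
Qed.

Lemma H0 : H B 0 = 0.
Proof. by rewrite /H /ndigits eqxx big_ord0. Qed.

Lemma H_rec x : H B x = (x %% B) ^ 2 + H B (x %/ B).
Proof.
have [->|x_gt0] := posnP x; first by rewrite mod0n div0n H0.
rewrite /H ndigits_div // big_ord_recl /digit expn0 divn1; congr (_ + _).
by apply: eq_bigr => i _; rewrite -divnMA -expnS.
Qed.

Lemma H_mulD x d : d < B -> H B (B * x + d) = H B x + d ^ 2.
Proof.
move=> d_ltB; rewrite H_rec addnC mulnC.
by rewrite modnMDl modn_small // divnMDl ?divn_small ?addn0 //; lia.
Qed.

Lemma H_le_mul x : H B x <= (B - 1) * x.
Proof.
elim/ltn_ind: x => x IH.
have [->|x_gt0] := posnP x; first by rewrite H0.
have IHq := IH (x %/ B) (ltn_Pdiv B_gt1 x_gt0).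
have d_ltB := ltn_pmod x (ltnW B_gt1).
have d_sq : (x %% B) ^ 2 <= (B - 1) * (x %% B) by rewrite mulnC leq_mul2l; lia.
rewrite H_rec [X in _ <= _ * X](divn_eq x B).
move: (x %/ B) (x %% B) IHq d_sq => q d; nia.
Qed.

Lemma H_le_2sq x : x < B ^ 2 -> H B x <= 2 * (B - 1) ^ 2.
Proof.
move=> x_lt; rewrite H_rec.
have q_ltB : x %/ B < B by rewrite ltn_divLR ?mulnn; lia.
have d_ltB := ltn_pmod x (ltnW B_gt1).
have := H_le_mul (x %/ B).
move: (x %/ B) (x %% B) q_ltB d_ltB => q d q_ltB d_ltB; nia.
Qed.

(* Two digits are peeled off: one digit alone does not compensate the
   [(B-1) * x] bound on the rest when [B >= 4]. *)
Lemma H_lt_self x : B ^ 2 <= x -> H B x < x.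
Proof.
move=> x_ge; have B_gt0 : 0 < B by lia.
have r_gt0 : 0 < x %/ B %/ B by rewrite -divnMA divn_gt0 ?mulnn //; lia.
have IHr := H_le_mul (x %/ B %/ B).
have d_ltB := ltn_pmod x B_gt0; have f_ltB := ltn_pmod (x %/ B) B_gt0.
rewrite H_rec (H_rec (x %/ B)).
rewrite [X in _ < X](divn_eq x B) [X in X * B + _](divn_eq (x %/ B) B).
move: (x %/ B %/ B) (x %/ B %% B) (x %% B) r_gt0 d_ltB f_ltB IHr.
move=> r f d r_gt0 d_ltB f_ltB IHr.
have d_sq : d ^ 2 <= (B - 1) * d by rewrite mulnC leq_mul2l; lia.
have f_sq : f ^ 2 <= f * B by rewrite leq_mul2l; lia.
suff : (B - 1) * d + (B - 1) * r < r * B * B + d by rewrite mulnDl; lia.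
rewrite (_ : B = (B - 2).+2) in d_ltB *; last by lia.
move: (B - 2) d_ltB => b; rewrite !subSS subn0 => d_lt.
have bd : b * d <= b * b.+1 by rewrite leq_mul2l; lia.
nia.
Qed.

Fixpoint repunit (k : nat) : nat := if k is k'.+1 then B * repunit k' + 1 else 0.

Lemma H_repunit k : H B (repunit k) = k.
Proof. by elim: k => [|k IH] /=; rewrite ?H0 // H_mulD // IH addn1. Qed.

Lemma H1 : H B 1 = 1.
Proof. by have := H_repunit 1; rewrite /= muln0. Qed.

Lemma Hiter0 n : Hiter B n 0 = 0.
Proof. by elim: n => //= n; rewrite /Hiter /= => ->; rewrite H0. Qed.

Lemma HiterS n x : Hiter B n.+1 x = Hiter B n (H B x).
Proof. exact: iterSr. Qed.

Lemma has_heightS n x :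
  has_height B n.+1 x = (x != 1) && has_height B n (H B x).
Proof.
rewrite /has_height (HiterS n) /= andbCA; congr (_ && (_ && _)).
rewrite -[1]/(1 + 0) iotaDl all_map; apply: eq_all => m /=.
by rewrite add0n -(HiterS m).
Qed.

Lemma has_height_neq0 n x : has_height B n x -> x != 0.
Proof. by case/andP=> + _; apply: contraTneq => ->; rewrite Hiter0. Qed.

Lemma gamma_min n x : gamma_pred B n x -> gamma B n <= x.
Proof.
move=> px; rewrite /gamma; case: excluded_middle_informative => [ex|[]].
  by case: ex_minnP => m _; apply.
by exists x.
Qed.

Lemma gamma_gt0 n x : gamma_pred B n x -> 0 < gamma B n.
Proof.
move=> px; rewrite /gamma; case: excluded_middle_informative => [ex|[]].
  by case: ex_minnP => m /andP[].
by exists x.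
Qed.

Lemma gamma_pred_gamma n : 0 < gamma B n -> gamma_pred B n (gamma B n).
Proof. by rewrite /gamma; case: excluded_middle_informative => // ex _; case: ex_minnP. Qed.

Lemma gamma_succ_gt0 n : 1 < gamma B n -> 0 < gamma B n.+1.
Proof.
move=> y_gt1; have /andP[_ y_ht] := gamma_pred_gamma (ltnW y_gt1).
apply: (@gamma_gt0 _ (repunit (gamma B n))); apply/andP; split.
  by rewrite lt0n; apply: contraTneq y_gt1 => r0; rewrite -(H_repunit (gamma B n)) r0 H0.
rewrite has_heightS H_repunit y_ht andbT.
by apply: contraTneq y_gt1 => r1; rewrite -(H_repunit (gamma B n)) r1 H1.
Qed.

Lemma gamma_le_H n : 0 < gamma B n.+1 -> gamma B n <= H B (gamma B n.+1).
Proof.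
move=> z_gt0; have /andP[_] := gamma_pred_gamma z_gt0; rewrite has_heightS => /andP[_ hz].
by apply: gamma_min; rewrite /gamma_pred lt0n hz (has_height_neq0 hz).
Qed.

Lemma gamma_lt_succ n : B ^ 2 <= gamma B n.+1 -> gamma B n < gamma B n.+1.
Proof.
move=> z_ge; have z_gt0 : 0 < gamma B n.+1 by nia.
exact: leq_ltn_trans (gamma_le_H z_gt0) (H_lt_self z_ge).
Qed.

Lemma gamma_succ_ge_sq n :
  2 * (B - 1) ^ 2 < gamma B n -> B ^ 2 <= gamma B n.+1.
Proof.
move=> y_gt; rewrite leqNgt; apply/negP => z_lt.
have z_gt0 : 0 < gamma B n.+1 by apply: gamma_succ_gt0; lia.
have := leq_trans (gamma_le_H z_gt0) (H_le_2sq z_lt); lia.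
Qed.

End HappyHeights.

Theorem lemma2p3 (B eta : nat) :
  2 <= B ->
  ((3 <= B /\ 2 * (B - 1) ^ 2 < gamma B eta.+1) \/ (B = 2 /\ B ^ 2 <= gamma B eta.+1)) ->
  forall n, eta <= n -> gamma B n < gamma B n.+1.
Proof.
move=> B_gt1 hyp.
have sq_eta : B ^ 2 <= gamma B eta.+1 by case: hyp => [[? ?]|[_ //]]; nia.
have large_eta : 2 * (B - 1) ^ 2 < gamma B eta.+1 by case: hyp => [[_ //]|[-> ?]]; lia.
have large m : eta < m -> 2 * (B - 1) ^ 2 < gamma B m.
  elim: m => [//|m IH]; rewrite ltnS leq_eqVlt => /orP[/eqP <- //|eta_lt].
  exact: ltn_trans (IH eta_lt) (gamma_lt_succ B_gt1 (gamma_succ_ge_sq B_gt1 (IH eta_lt))).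
move=> n; rewrite leq_eqVlt => /orP[/eqP <-|eta_lt]; apply: gamma_lt_succ => //.
exact: gamma_succ_ge_sq (large n eta_lt).
Qed.
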